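(* Let $\mathscr{A}$ be a closed set of games with misère quotient $(\mathcal{Q},\mathcal{P})$ and quotient map $\Phi$, and let $G$ be a game all of whose options lie in $\mathscr{A}$. Suppose there is $H\in\mathscr{A}$ with $\{\Phi(G'):G'\text{ an option of }G\}=\{\Phi(H'):H'\text{ an option of }H\}$. Let $\mathscr{A}^+=\mathrm{cl}(\mathscr{A}\cup\{G\})$ with quotient map $\Phi^+$. Then $\mathcal{Q}(\mathscr{A}^+)\cong\mathcal{Q}(\mathscr{A})$ via an isomorphism of bipartite monoids $\iota:\mathcal{Q}(\mathscr{A})\to\mathcal{Q}(\mathscr{A}^+)$ satisfying $\iota(\Phi(X))=\Phi^+(X)$ for all $X\in\mathscr{A}$, and $\Phi^+(G)=\Phi^+(H)$.
   Context: Games are finite, loopfree impartial games identified with the finite set of their options; disjunctive sum $G+H=\{G'+H\}\cup\{G+H'\}$. Misère outcome: $o^-(G)=\mathscr{P}$ iff $G\neq0$ and every option has outcome $\mathscr{N}$; otherwise $\mathscr{N}$. A set of games is closed if it contains all options of its members and is closed under $+$. $\mathrm{cl}(\mathscr{S})$ is the closure under addition of the set of all subpositions of members of $\mathscr{S}$. For closed $\mathscr{A}$: $G\equiv_\mathscr{A}H$ iff $o^-(G+X)=o^-(H+X)$ for all $X\in\mathscr{A}$; the misère quotient $\mathcal{Q}(\mathscr{A})=(\mathcal{Q},\mathcal{P})$ is the commutative monoid of $\equiv_\mathscr{A}$-classes ($[G][H]=[G+H]$) together with the set $\mathcal{P}$ of classes of misère $\mathscr{P}$-positions; $\Phi(G)=[G]$.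 An isomorphism of bipartite monoids $(\mathcal{Q},\mathcal{P})\to(\mathcal{S},\mathcal{R})$ is a monoid isomorphism $f$ with $x\in\mathcal{P}\iff f(x)\in\mathcal{R}$. *)

From Stdlib Require Import List Bool ClassicalEpsilon.
Import ListNotations.

Inductive game : Type := Opt : list game -> game.

Definition opts (G : game) : list game := match G with Opt gs => gs end.

Definition zero : game := Opt [].

(* Disjunctive sum: G + H = {G' + H} u {G + H'} *)
Fixpoint gsum (G : game) : game -> game :=
  fix aux (H : game) : game :=
    match G, H with
    | Opt gs, Opt hs => Opt (map (fun g => gsum g H) gs ++ map aux hs)
    end.

(* Misère outcome: isP G = true iff o^-(G) = P, i.e. G <> 0 and every
   option of G is an N-position. *)
Fixpoint isP (G : game) : bool :=
  match G with
  | Opt gs => match gs with [] => false | _ => true end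
              && forallb (fun g => negb (isP g)) gs
  end.

Definition closed (A : game -> Prop) : Prop :=
  (forall X, A X -> forall X', In X' (opts X) -> A X') /\
  (forall X Y, A X -> A Y -> A (gsum X Y)).

Inductive subpos : game -> game -> Prop :=
| subpos_refl G : subpos G G
| subpos_opt G G' X : In G' (opts G) -> subpos X G' -> subpos X G.

Inductive cl (S : game -> Prop) : game -> Prop :=
| cl_sub X G : S G -> subpos X G -> cl S X
| cl_add X Y : cl S X -> cl S Y -> cl S (gsum X Y).

Definition equivA (A : game -> Prop) (G H : game) : Prop :=
  forall X, A X -> isP (gsum G X) = isP (gsum H X).

Definition cls (A : game -> Prop) (X : game) : game -> Prop :=
  fun Y => A Y /\ equivA A X Y.

Definition Q (A : game -> Prop) : Type :=
  { c : game -> Prop | exists X, A X /\ c = cls A X }.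

Definition Phi (A : game -> Prop) (X : game) (hX : A X) : Q A :=
  exist _ (cls A X) (ex_intro _ X (conj hX eq_refl)).

Definition rep {A : game -> Prop} (c : Q A) : game :=
  proj1_sig (constructive_indefinite_description _ (proj2_sig c)).

Lemma rep_spec {A : game -> Prop} (c : Q A) :
  A (rep c) /\ proj1_sig c = cls A (rep c).
Proof.
  unfold rep. destruct (constructive_indefinite_description _ _) as [X HX].
  exact HX.
Qed.

(* Monoid product [X][Y] = [X+Y] (computed on representatives; when A is
   closed the sum of representatives lies in A). *)
Definition qmul {A : game -> Prop} (c d : Q A) : Q A :=
  match excluded_middle_informative (A (gsum (rep c) (rep d))) with
  | left h => Phi A (gsum (rep c) (rep d)) h
  | right _ => c
  end.

Definition qP {A : game -> Prop} (c : Q A) : Prop :=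
  exists X, proj1_sig c X /\ isP X = true.

From Stdlib Require Import List Bool ClassicalEpsilon ProofIrrelevance FunctionalExtensionality PropExtensionality.
Import ListNotations.

(* Every position of cl(A u {G}) is isomorphic to X + k.G with X in A.  Since
   the options of G and H have the same A-classes, a move inside a copy of G
   can be answered by a move inside a copy of H to an A-equivalent position,
   and vice versa; so X + k.G and X + k.H have the same outcome.  Hence every
   position of A+ is A+-equivalent to a member of A, and members of A that are
   A-equivalent stay equivalent in A+: the inclusion A <= A+ induces a
   bijective, multiplicative, P-preserving map of quotients, and G is
   A+-equivalent to H. *)

Lemma game_ind_opts (P : game -> Prop) :
  (forall G, (forall g, In g (opts G) -> P g) -> P G) -> forall G, P G.
Proof.
  intros step; fix IH 1; intros [gs]; apply step; simpl.
  induction gs as [|g gs IHgs]; intros x hx; [contradiction|].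
  destruct hx as [<-|hx]; [apply IH | apply IHgs; exact hx].
Qed.

Lemma opts_gsum G H :
  opts (gsum G H) = map (fun g => gsum g H) (opts G) ++ map (gsum G) (opts H).
Proof. destruct G, H; reflexivity. Qed.

Lemma in_opts_gsum G H w : In w (opts (gsum G H)) ->
  (exists g, In g (opts G) /\ w = gsum g H) \/ (exists h, In h (opts H) /\ w = gsum G h).
Proof.
  rewrite opts_gsum, in_app_iff, !in_map_iff.
  intros [[x [<- hx]]|[x [<- hx]]]; [left|right]; exists x; auto.
Qed.

Lemma gsum_opt_l G H g : In g (opts G) -> In (gsum g H) (opts (gsum G H)).
Proof. intro hg; rewrite opts_gsum, in_app_iff, !in_map_iff; left; eauto. Qed.

Lemma gsum_opt_r G H h : In h (opts H) -> In (gsum G h) (opts (gsum G H)).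
Proof. intro hh; rewrite opts_gsum, in_app_iff, !in_map_iff; right; eauto. Qed.

(* Disjunctive sum is commutative and associative only up to [iso], the
   bisimilarity of game trees. *)
Inductive iso : game -> game -> Prop :=
| iso_intro gs hs :
    (forall g, In g gs -> exists h, In h hs /\ iso g h) ->
    (forall h, In h hs -> exists g, In g gs /\ iso g h) ->
    iso (Opt gs) (Opt hs).

Definition bisimulation (R : game -> game -> Prop) : Prop :=
  forall Y Z, R Y Z ->
    (forall y, In y (opts Y) -> exists z, In z (opts Z) /\ R y z) /\
    (forall z, In z (opts Z) -> exists y, In y (opts Y) /\ R y z).

Lemma iso_bisimulation : bisimulation iso.
Proof. intros Y Z [gs hs hl hr]; simpl; auto. Qed.

Lemma bisimulation_iso R : bisimulation R -> forall Y Z, R Y Z -> iso Y Z.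
Proof.
  intros hR Y; induction Y as [Y IH] using game_ind_opts; intros Z hYZ.
  destruct (hR Y Z hYZ) as [hl hr]; destruct Y as [ys], Z as [zs]; simpl in *.
  constructor.
  - intros y hy; destruct (hl y hy) as [z [hz hyz]]; exists z; auto.
  - intros z hz; destruct (hr z hz) as [y [hy hyz]]; exists y; auto.
Qed.

Lemma iso_refl G : iso G G.
Proof.
  apply (bisimulation_iso eq); [|reflexivity].
  intros Y Z <-; split; intros y hy; exists y; auto.
Qed.

Lemma iso_sym G H : iso G H -> iso H G.
Proof.
  apply (bisimulation_iso (fun Y Z => iso Z Y)); intros Y Z hZY.
  destruct (iso_bisimulation Z Y hZY) as [hl hr]; split; auto.
Qed.

Lemma iso_trans X Y Z : iso X Y -> iso Y Z -> iso X Z.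
Proof.
  intros hXY hYZ; apply (bisimulation_iso (fun X Z => exists Y, iso X Y /\ iso Y Z)); eauto.
  clear; intros X Z [Y [hXY hYZ]].
  destruct (iso_bisimulation X Y hXY) as [hl1 hr1], (iso_bisimulation Y Z hYZ) as [hl2 hr2].
  split.
  - intros x hx; destruct (hl1 x hx) as [y [hy hxy]], (hl2 y hy) as [z [hz hyz]]; eauto.
  - intros z hz; destruct (hr2 z hz) as [y [hy hyz]], (hr1 y hy) as [x [hx hxy]]; eauto.
Qed.

Lemma iso_gsum G G' H H' : iso G G' -> iso H H' -> iso (gsum G H) (gsum G' H').
Proof.
  intros hG hH.
  apply (bisimulation_iso (fun P P' => exists G G' H H',
           iso G G' /\ iso H H' /\ P = gsum G H /\ P' = gsum G' H')); [|eauto 10].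
  clear; intros P P' (G & G' & H & H' & hG & hH & -> & ->).
  destruct (iso_bisimulation G G' hG) as [hGl hGr], (iso_bisimulation H H' hH) as [hHl hHr].
  split; intros w hw; apply in_opts_gsum in hw as [[x [hx ->]]|[x [hx ->]]].
  - destruct (hGl x hx) as [x' [hx' e]].
    exists (gsum x' H'); split; [apply gsum_opt_l; auto | eauto 10].
  - destruct (hHl x hx) as [x' [hx' e]].
    exists (gsum G' x'); split; [apply gsum_opt_r; auto | eauto 10].
  - destruct (hGr x hx) as [x' [hx' e]].
    exists (gsum x' H); split; [apply gsum_opt_l; auto | eauto 10].
  - destruct (hHr x hx) as [x' [hx' e]].
    exists (gsum G x'); split; [apply gsum_opt_r; auto | eauto 10].
Qed.

Lemma gsum_comm_iso G H : iso (gsum G H) (gsum H G).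
Proof.
  apply (bisimulation_iso (fun P P' => exists G H, P = gsum G H /\ P' = gsum H G)); eauto.
  clear; intros P P' (G & H & -> & ->).
  split; intros w hw; apply in_opts_gsum in hw as [[x [hx ->]]|[x [hx ->]]].
  - exists (gsum H x); split; [apply gsum_opt_r; auto | eauto].
  - exists (gsum x G); split; [apply gsum_opt_l; auto | eauto].
  - exists (gsum G x); split; [apply gsum_opt_r; auto | eauto].
  - exists (gsum x H); split; [apply gsum_opt_l; auto | eauto].
Qed.

Lemma gsum_assoc_iso G H K : iso (gsum (gsum G H) K) (gsum G (gsum H K)).
Proof.
  apply (bisimulation_iso (fun P P' => exists G H K,
           P = gsum (gsum G H) K /\ P' = gsum G (gsum H K))); eauto 10.
  clear; intros P P' (G & H & K & -> & ->).
  split; intros w hw; apply in_opts_gsum in hw as [[x [hx ->]]|[x [hx ->]]].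
  - apply in_opts_gsum in hx as [[y [hy ->]]|[y [hy ->]]].
    + exists (gsum y (gsum H K)); split; [apply gsum_opt_l; auto | eauto 10].
    + exists (gsum G (gsum y K)); split; [apply gsum_opt_r, gsum_opt_l; auto | eauto 10].
  - exists (gsum G (gsum H x)); split; [apply gsum_opt_r, gsum_opt_r; auto | eauto 10].
  - exists (gsum (gsum x H) K); split; [apply gsum_opt_l, gsum_opt_l; auto | eauto 10].
  - apply in_opts_gsum in hx as [[y [hy ->]]|[y [hy ->]]].
    + exists (gsum (gsum G y) K); split; [apply gsum_opt_l, gsum_opt_r; auto | eauto 10].
    + exists (gsum (gsum G H) y); split; [apply gsum_opt_r; auto | eauto 10].
Qed.

Lemma gsum_zero_l_iso G : iso (gsum zero G) G.
Proof.
  apply (bisimulation_iso (fun P P' => P = gsum zero P')); [|reflexivity].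
  intros P G' ->; split.
  - intros w hw; apply in_opts_gsum in hw as [[x [hx _]]|[x [hx ->]]];
      [contradiction | exists x; auto].
  - intros x hx; exists (gsum zero x); split; [apply gsum_opt_r|]; auto.
Qed.

Lemma gsum_swap_iso G H K : iso (gsum (gsum G H) K) (gsum (gsum G K) H).
Proof.
  eapply iso_trans; [apply gsum_assoc_iso|].
  eapply iso_trans; [apply iso_gsum; [apply iso_refl | apply gsum_comm_iso]|].
  apply iso_sym, gsum_assoc_iso.
Qed.
Lemma isP_true Y :
  isP Y = true <-> opts Y <> [] /\ forall y, In y (opts Y) -> isP y = false.
Proof.
  destruct Y as [[|y0 ys]]; [split; [discriminate | intros [[] _]; reflexivity]|].
  change (isP (Opt (y0 :: ys))) with (forallb (fun g => negb (isP g)) (y0 :: ys)).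
  simpl opts; rewrite forallb_forall; split.
  - intro h; split; [discriminate|]; intros y hy; apply negb_true_iff, h, hy.
  - intros [_ h] y hy; rewrite h; auto.
Qed.

Lemma isP_by_opts Y Z :
  (forall y, In y (opts Y) -> exists z, In z (opts Z) /\ isP y = isP z) ->
  (forall z, In z (opts Z) -> exists y, In y (opts Y) /\ isP y = isP z) ->
  isP Y = isP Z.
Proof.
  assert (nonempty : forall X, opts X <> [] <-> exists x, In x (opts X)).
  { intros [[|x xs]]; simpl; split.
    - intro h; contradiction h; reflexivity.
    - intros [x []].
    - intros _; exists x; left; reflexivity.
    - discriminate. }
  intros hl hr; apply eq_iff_eq_true; rewrite !isP_true, !nonempty; split.
  - intros [[y hy] hall]; split.
    + destruct (hl y hy) as [z [hz _]]; eauto.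
    + intros z hz; destruct (hr z hz) as [y' [hy' <-]]; auto.
  - intros [[z hz] hall]; split.
    + destruct (hr z hz) as [y [hy _]]; eauto.
    + intros y hy; destruct (hl y hy) as [z' [hz' ->]]; auto.
Qed.

Lemma isP_simulation (R : game -> game -> Prop) :
  (forall Y Z, R Y Z ->
     (forall y, In y (opts Y) -> exists z z', In z (opts Z) /\ R y z' /\ isP z' = isP z) /\
     (forall z, In z (opts Z) -> exists y z', In y (opts Y) /\ R y z' /\ isP z' = isP z)) ->
  forall Y Z, R Y Z -> isP Y = isP Z.
Proof.
  intros hR Y; induction Y as [Y IH] using game_ind_opts; intros Z hYZ.
  destruct (hR Y Z hYZ) as [hl hr]; apply isP_by_opts.
  - intros y hy; destruct (hl y hy) as (z & z' & hz & hyz' & e).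
    exists z; split; [exact hz|]; rewrite <- e; apply (IH y hy z' hyz').
  - intros z hz; destruct (hr z hz) as (y & z' & hy & hyz' & e).
    exists y; split; [exact hy|]; rewrite <- e; apply (IH y hy z' hyz').
Qed.

Lemma isP_iso Y Z : iso Y Z -> isP Y = isP Z.
Proof.
  apply isP_simulation; intros Y' Z' h.
  destruct (iso_bisimulation Y' Z' h) as [hl hr]; split.
  - intros y hy; destruct (hl y hy) as [z [hz e]]; exists z, z; auto.
  - intros z hz; destruct (hr z hz) as [y [hy e]]; exists y, z; auto.
Qed.

Fixpoint add_copies (X : game) (k : nat) (K : game) : game :=
  match k with 0 => X | S j => add_copies (gsum X K) j K end.

Lemma add_copies_iso K j X1 X2 :
  iso X1 X2 -> iso (add_copies X1 j K) (add_copies X2 j K).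
Proof.
  revert X1 X2; induction j as [|j IH]; simpl; auto.
  intros X1 X2 h; apply IH, iso_gsum; [exact h | apply iso_refl].
Qed.

Lemma add_copies_gsum K j X V :
  iso (add_copies (gsum X V) j K) (gsum V (add_copies X j K)).
Proof.
  revert X; induction j as [|j IH]; simpl; intro X; [apply gsum_comm_iso|].
  eapply iso_trans; [apply add_copies_iso, gsum_swap_iso | apply IH].
Qed.

Lemma gsum_add_copies K X Z k l :
  iso (gsum (add_copies X k K) (add_copies Z l K)) (add_copies (gsum X Z) (k + l) K).
Proof.
  revert X; induction k as [|k IH]; simpl; intro X.
  - eapply iso_trans; [apply iso_sym, add_copies_gsum|].
    apply add_copies_iso, gsum_comm_iso.
  - eapply iso_trans; [apply IH|]; apply add_copies_iso, gsum_swap_iso.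
Qed.

Lemma add_copies_opt K j X x :
  In x (opts X) -> In (add_copies x j K) (opts (add_copies X j K)).
Proof.
  revert X x; induction j as [|j IH]; simpl; auto.
  intros X x hx; apply IH, gsum_opt_l, hx.
Qed.

Lemma add_copies_opt_copy K j X K' :
  In K' (opts K) -> In (add_copies (gsum X K') j K) (opts (add_copies X (S j) K)).
Proof. intro h; exact (add_copies_opt K j _ _ (gsum_opt_r X K K' h)). Qed.

Lemma in_opts_add_copies K k X w : In w (opts (add_copies X k K)) ->
  (exists x, In x (opts X) /\ w = add_copies x k K) \/
  (exists j K', k = S j /\ In K' (opts K) /\ iso w (add_copies (gsum X K') j K)).
Proof.
  revert X; induction k as [|k IH]; intros X hw; [left; exists w; auto|].
  destruct (IH _ hw) as [[o [ho ->]] | (j & K' & -> & hK' & e)].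
  - apply in_opts_gsum in ho as [[x [hx ->]]|[x [hx ->]]].
    + left; exists x; auto.
    + right; exists k, x; auto using iso_refl.
  - right; exists (S j), K'; repeat split; [exact hK'|].
    eapply iso_trans; [exact e|]; simpl; apply add_copies_iso, gsum_swap_iso.
Qed.

Lemma closed_subpos A X Y : closed A -> A Y -> subpos X Y -> A X.
Proof.
  intros hA hY hXY; induction hXY as [|Y Y' X hY' _ IH]; auto.
  apply IH, (proj1 hA Y hY _ hY').
Qed.

Lemma closed_zero A X : closed A -> A X -> A zero.
Proof.
  intro hA; induction X as [X IH] using game_ind_opts; intro hX.
  destruct X as [[|x xs]]; [exact hX|].
  apply (IH x); [left; reflexivity | apply (proj1 hA _ hX); left; reflexivity].
Qed.

Lemma closed_add_copies A X k K : closed A -> A X -> A K -> A (add_copies X k K).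
Proof.
  intros hA; revert X; induction k as [|k IH]; simpl; auto.
  intros X hX hK; apply IH; [apply (proj2 hA) |]; auto.
Qed.

Lemma equivA_refl B X : equivA B X X.
Proof. intros W _; reflexivity. Qed.

Lemma equivA_sym B X Y : equivA B X Y -> equivA B Y X.
Proof. intros e W hW; symmetry; auto. Qed.

Lemma equivA_trans B X Y Z : equivA B X Y -> equivA B Y Z -> equivA B X Z.
Proof. intros e1 e2 W hW; rewrite e1; auto. Qed.

Lemma equivA_iso B X Y : iso X Y -> equivA B X Y.
Proof. intros h W _; apply isP_iso, iso_gsum; [exact h | apply iso_refl]. Qed.

Lemma equivA_sub (B1 B2 : game -> Prop) X Y :
  (forall Z, B1 Z -> B2 Z) -> equivA B2 X Y -> equivA B1 X Y.
Proof. intros h e W hW; auto. Qed.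

Lemma equivA_isP B X Y : B zero -> equivA B X Y -> isP X = isP Y.
Proof.
  intros hz e.
  assert (zero_r : forall Z, iso (gsum Z zero) Z)
    by (intro Z; eapply iso_trans; [apply gsum_comm_iso | apply gsum_zero_l_iso]).
  rewrite <- (isP_iso _ _ (zero_r X)), <- (isP_iso _ _ (zero_r Y)); auto.
Qed.

Lemma isP_gsum_equivA_r B X Y Y' :
  B X -> equivA B Y Y' -> isP (gsum X Y) = isP (gsum X Y').
Proof.
  intros hX e.
  rewrite (isP_iso _ _ (gsum_comm_iso X Y)), (isP_iso _ _ (gsum_comm_iso X Y')); auto.
Qed.

Lemma equivA_gsum (B : game -> Prop) X X' Y Y' :
  (forall U V, B U -> B V -> B (gsum U V)) -> B X' -> B Y -> B Y' ->
  equivA B X X' -> equivA B Y Y' -> equivA B (gsum X Y) (gsum X' Y').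
Proof.
  intros hB hX' hY hY' eX eY W hW.
  assert (reassoc : forall U V, isP (gsum (gsum U V) W) = isP (gsum V (gsum U W))).
  { intros U V; apply isP_iso.
    eapply iso_trans; [apply iso_gsum; [apply gsum_comm_iso | apply iso_refl]|].
    apply gsum_assoc_iso. }
  rewrite (isP_iso _ _ (gsum_assoc_iso X Y W)), eX by auto.
  rewrite <- (isP_iso _ _ (gsum_assoc_iso X' Y W)), !reassoc; auto.
Qed.

Lemma Q_eq B (c d : Q B) : proj1_sig c = proj1_sig d -> c = d.
Proof.
  destruct c as [c hc], d as [d hd]; simpl; intros ->; f_equal; apply proof_irrelevance.
Qed.

Lemma Phi_eq B X Y hX hY : equivA B X Y -> Phi B X hX = Phi B Y hY.
Proof.
  intro e; apply Q_eq; simpl.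
  extensionality Z; apply propositional_extensionality; unfold cls.
  split; intros [hZ e']; split; auto; eapply equivA_trans; eauto using equivA_sym.
Qed.

Lemma Phi_inj B X Y hX hY : Phi B X hX = Phi B Y hY -> equivA B X Y.
Proof.
  intro e; apply (f_equal (@proj1_sig _ _)) in e; simpl in e.
  assert (h : cls B Y Y) by (split; [exact hY | apply equivA_refl]).
  rewrite <- e in h; apply h.
Qed.

Lemma Phi_surj B (c : Q B) : exists X hX, c = Phi B X hX.
Proof.
  destruct c as [c hc]; destruct hc as [X [hX ->]] eqn:E.
  exists X, hX; apply Q_eq; reflexivity.
Qed.

Lemma rep_Phi B X hX : B (rep (Phi B X hX)) /\ equivA B X (rep (Phi B X hX)).
Proof.
  destruct (rep_spec (Phi B X hX)) as [hr e]; simpl in e.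
  assert (h : cls B (rep (Phi B X hX)) (rep (Phi B X hX)))
    by (split; [exact hr | apply equivA_refl]).
  rewrite <- e in h; exact h.
Qed.

Lemma qmul_Phi B (hB : forall U V, B U -> B V -> B (gsum U V)) X Y hX hY :
  qmul (Phi B X hX) (Phi B Y hY) = Phi B (gsum X Y) (hB X Y hX hY).
Proof.
  destruct (rep_Phi B X hX) as [hX' eX], (rep_Phi B Y hY) as [hY' eY].
  unfold qmul; destruct (excluded_middle_informative _) as [h | n].
  - apply Phi_eq, equivA_sym, equivA_gsum; auto.
  - contradiction (n (hB _ _ hX' hY')).
Qed.

Lemma qP_Phi B X hX : B zero -> (qP (Phi B X hX) <-> isP X = true).
Proof.
  intro hz; unfold qP; simpl; split.
  - intros [Y [[_ e] hY]]; rewrite (equivA_isP B X Y hz e); exact hY.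
  - intro h; exists X; repeat split; auto using equivA_refl.
Qed.

Lemma bijective_inverse {T U : Type} (f : T -> U) :
  (forall x y, f x = f y -> x = y) -> (forall y, exists x, f x = y) ->
  exists g : U -> T, (forall x, g (f x) = x) /\ (forall y, f (g y) = y).
Proof.
  intros inj surj.
  exists (fun y => proj1_sig (constructive_indefinite_description _ (surj y))).
  split.
  - intro x; apply inj; destruct (constructive_indefinite_description _ _) as [y hy]; exact hy.
  - intro y; destruct (constructive_indefinite_description _ _) as [x hx]; exact hx.
Qed.

Section OneGameExtension.

Variables (A : game -> Prop) (G H : game).
Hypothesis hA : closed A.
Hypothesis hGA : forall G', In G' (opts G) -> A G'.
Hypothesis hH : A H.
Hypothesis hGH : forall G', In G' (opts G) -> exists H', In H' (opts H) /\ equivA A G' H'.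
Hypothesis hHG : forall H', In H' (opts H) -> exists G', In G' (opts G) /\ equivA A G' H'.

Local Notation Ap := (cl (fun X => A X \/ X = G)).

Lemma A_sub_ext X : A X -> Ap X.
Proof. intro hX; apply (cl_sub _ X X); [left; exact hX | constructor]. Qed.

Lemma ext_add_copies Y : Ap Y -> exists X k, A X /\ iso Y (add_copies X k G).
Proof.
  induction 1 as [Y W [hW | ->] hYW | Y1 Y2 _ (X1 & k1 & h1 & e1) _ (X2 & k2 & h2 & e2)].
  - exists Y, 0; split; [apply (closed_subpos A Y W); auto | apply iso_refl].
  - inversion hYW as [| G0 G' Y0 hG' hY]; subst.
    + exists zero, 1; split; [exact (closed_zero A H hA hH) | apply iso_sym, gsum_zero_l_iso].
    + exists Y, 0; split; [apply (closed_subpos A Y G'); auto | apply iso_refl].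
  - exists (gsum X1 X2), (k1 + k2); split; [apply (proj2 hA); auto|].
    eapply iso_trans; [apply iso_gsum; eauto | apply gsum_add_copies].
Qed.

Lemma isP_add_copies_equivA X G' H' j : A X -> equivA A G' H' ->
  isP (add_copies (gsum X G') j H) = isP (add_copies (gsum X H') j H).
Proof.
  intros hX e.
  rewrite (isP_iso _ _ (add_copies_gsum H j X G')), (isP_iso _ _ (add_copies_gsum H j X H')).
  apply e, closed_add_copies; auto.
Qed.

Lemma isP_add_copies_swap X k : A X -> isP (add_copies X k G) = isP (add_copies X k H).
Proof.
  intro hX.
  apply (isP_simulation (fun Y Z => exists X k,
           A X /\ iso Y (add_copies X k G) /\ Z = add_copies X k H));
    [| exists X, k; repeat split; [exact hX | apply iso_refl]].
  clear X k hX; intros Y Z (X & k & hX & eY & ->).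
  destruct (iso_bisimulation _ _ eY) as [hl hr]; split.
  - intros y hy; destruct (hl y hy) as [w [hw eyw]].
    destruct (in_opts_add_copies G k X w hw) as [[x [hx ->]] | (j & G' & -> & hG' & ew)].
    + exists (add_copies x k H), (add_copies x k H).
      split; [apply add_copies_opt; exact hx|].
      split; [exists x, k; repeat split; [exact (proj1 hA X hX x hx) | exact eyw] | reflexivity].
    + destruct (hGH G' hG') as [H' [hH' e]].
      exists (add_copies (gsum X H') j H), (add_copies (gsum X G') j H).
      split; [apply add_copies_opt_copy; exact hH'|].
      split; [exists (gsum X G'), j; repeat split; [apply (proj2 hA); auto | eapply iso_trans; eauto]|].
      apply isP_add_copies_equivA; assumption.
  - intros z hz.
    destruct (in_opts_add_copies H k X z hz) as [[x [hx ->]] | (j & H' & -> & hH' & ez)].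
    + destruct (hr _ (add_copies_opt G k X x hx)) as [y [hy eyw]].
      exists y, (add_copies x k H); split; [exact hy|].
      split; [exists x, k; repeat split; [exact (proj1 hA X hX x hx) | exact eyw] | reflexivity].
    + destruct (hHG H' hH') as [G' [hG' e]].
      destruct (hr _ (add_copies_opt_copy G j X G' hG')) as [y [hy eyw]].
      exists y, (add_copies (gsum X G') j H); split; [exact hy|].
      split; [exists (gsum X G'), j; repeat split; [apply (proj2 hA); auto | exact eyw]|].
      rewrite (isP_iso _ _ ez); apply isP_add_copies_equivA; assumption.
Qed.

Lemma isP_gsum_add_copies_swap X Z k l : A X -> A Z ->
  isP (gsum (add_copies X k G) (add_copies Z l G)) =
  isP (gsum (add_copies X k H) (add_copies Z l H)).
Proof.
  intros hX hZ.
  rewrite (isP_iso _ _ (gsum_add_copies G X Z k l)), (isP_iso _ _ (gsum_add_copies H X Z k l)).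
  apply isP_add_copies_swap, (proj2 hA); assumption.
Qed.

Lemma equivA_ext_add_copies Y X k : A X -> iso Y (add_copies X k G) ->
  equivA Ap Y (add_copies X k H).
Proof.
  intros hX eY W hW; destruct (ext_add_copies W hW) as (Z & l & hZ & eW).
  rewrite (isP_iso _ _ (iso_gsum _ _ _ _ eY eW)), isP_gsum_add_copies_swap by assumption.
  rewrite (isP_iso _ _ (iso_gsum _ _ _ _ (iso_refl (add_copies X k H)) eW)).
  symmetry; apply (isP_gsum_add_copies_swap (add_copies X k H) Z 0 l); [|exact hZ].
  apply closed_add_copies; assumption.
Qed.

Lemma equivA_ext X X' : A X -> A X' -> equivA A X X' -> equivA Ap X X'.
Proof.
  intros hX hX' e W hW; destruct (ext_add_copies W hW) as (Z & l & hZ & eW).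
  pose proof (equivA_ext_add_copies W Z l hZ eW) as eW'.
  rewrite (isP_gsum_equivA_r Ap X W _ (A_sub_ext X hX) eW').
  rewrite (isP_gsum_equivA_r Ap X' W _ (A_sub_ext X' hX') eW').
  apply e, closed_add_copies; assumption.
Qed.

Lemma equivA_ext_G_H : equivA Ap G H.
Proof.
  eapply equivA_trans; [apply (equivA_ext_add_copies G zero 1)|].
  - exact (closed_zero A H hA hH).
  - apply iso_sym, gsum_zero_l_iso.
  - apply equivA_iso, gsum_zero_l_iso.
Qed.

Definition ext_map (c : Q A) : Q Ap := Phi Ap (rep c) (A_sub_ext _ (proj1 (rep_spec c))).

Lemma ext_map_Phi X hX hX' : ext_map (Phi A X hX) = Phi Ap X hX'.
Proof.
  destruct (rep_Phi A X hX) as [hr e].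
  apply Phi_eq, equivA_sym, equivA_ext; assumption.
Qed.

Lemma ext_map_inj c d : ext_map c = ext_map d -> c = d.
Proof.
  destruct (Phi_surj A c) as (X & hX & ->), (Phi_surj A d) as (Y & hY & ->).
  rewrite (ext_map_Phi X hX (A_sub_ext X hX)), (ext_map_Phi Y hY (A_sub_ext Y hY)).
  intro e; apply Phi_eq, (equivA_sub A Ap); [exact A_sub_ext | exact (Phi_inj _ _ _ _ _ e)].
Qed.

Lemma ext_map_surj d : exists c, ext_map c = d.
Proof.
  destruct (Phi_surj Ap d) as (Y & hY & ->).
  destruct (ext_add_copies Y hY) as (X & k & hX & eY).
  assert (hXH : A (add_copies X k H)) by (apply closed_add_copies; assumption).
  exists (Phi A _ hXH); rewrite (ext_map_Phi _ _ (A_sub_ext _ hXH)).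
  apply Phi_eq, equivA_sym, (equivA_ext_add_copies Y X k hX eY).
Qed.

Lemma ext_map_qmul c d : ext_map (qmul c d) = qmul (ext_map c) (ext_map d).
Proof.
  destruct (Phi_surj A c) as (X & hX & ->), (Phi_surj A d) as (Y & hY & ->).
  rewrite (qmul_Phi A (proj2 hA) X Y hX hY).
  rewrite (ext_map_Phi _ _ (cl_add _ _ _ (A_sub_ext X hX) (A_sub_ext Y hY))).
  rewrite (ext_map_Phi X hX (A_sub_ext X hX)), (ext_map_Phi Y hY (A_sub_ext Y hY)).
  rewrite (qmul_Phi Ap (cl_add _)).
  apply Phi_eq, equivA_refl.
Qed.

Lemma ext_map_qP c : qP c <-> qP (ext_map c).
Proof.
  destruct (Phi_surj A c) as (X & hX & ->).
  pose proof (closed_zero A H hA hH) as hz.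
  rewrite (ext_map_Phi X hX (A_sub_ext X hX)).
  rewrite (qP_Phi A X hX hz), (qP_Phi Ap X _ (A_sub_ext _ hz)); reflexivity.
Qed.

End OneGameExtension.

Theorem mainTheorem13 (A : game -> Prop) (G H : game) :
  closed A ->
  (forall G', In G' (opts G) -> A G') ->
  A H ->
  (forall G' (hG' : A G'), In G' (opts G) ->
     exists H' (hH' : A H'), In H' (opts H) /\ Phi A G' hG' = Phi A H' hH') ->
  (forall H' (hH' : A H'), In H' (opts H) ->
     exists G' (hG' : A G'), In G' (opts G) /\ Phi A G' hG' = Phi A H' hH') ->
  let Ap := cl (fun X => A X \/ X = G) in
  exists iota : Q A -> Q Ap,
    (exists kappa : Q Ap -> Q A,
        (forall c, kappa (iota c) = c) /\ (forall d, iota (kappa d) = d)) /\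
    (forall c d, iota (qmul c d) = qmul (iota c) (iota d)) /\
    (forall c, qP c <-> qP (iota c)) /\
    (forall X (hX : A X) (hX' : Ap X), iota (Phi A X hX) = Phi Ap X hX') /\
    (forall (hG : Ap G) (hH : Ap H), Phi Ap G hG = Phi Ap H hH).
Proof.
  intros hA hGA hH matchGH matchHG Ap.
  assert (hGH : forall G', In G' (opts G) -> exists H', In H' (opts H) /\ equivA A G' H').
  { intros G' inG'; destruct (matchGH G' (hGA G' inG') inG') as (H' & hH' & inH' & e).
    exists H'; split; [exact inH' | exact (Phi_inj _ _ _ _ _ e)]. }
  assert (hHG : forall H', In H' (opts H) -> exists G', In G' (opts G) /\ equivA A G' H').
  { intros H' inH'; destruct (matchHG H' (proj1 hA H hH H' inH') inH') as (G' & hG' & inG' & e).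
    exists G'; split; [exact inG' | exact (Phi_inj _ _ _ _ _ e)]. }
  exists (ext_map A G); split; [|split; [|split; [|split]]].
  - exact (bijective_inverse _ (ext_map_inj A G H hA hGA hH hGH hHG)
                               (ext_map_surj A G H hA hGA hH hGH hHG)).
  - exact (ext_map_qmul A G H hA hGA hH hGH hHG).
  - exact (ext_map_qP A G H hA hGA hH hGH hHG).
  - exact (ext_map_Phi A G H hA hGA hH hGH hHG).
  - intros hG hH'; exact (Phi_eq _ _ _ _ _ (equivA_ext_G_H A G H hA hGA hH hGH hHG)).
Qed.
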